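(* Let $\hat e_1,\hat e_2$ be orthonormal vectors, $R_1=-I+2\hat e_1\otimes\hat e_1$, $R_2=-I+2\hat e_2\otimes\hat e_2$, let $V_1\in\mathbb{R}^{3\times3}$ be symmetric positive definite with eigenvalues $\lambda_1,\lambda_2,\lambda_3$ and orthonormal eigenvectors $\hat v_1,\hat v_2,\hat v_3$, and set $V_2=R_1V_1R_1^T$, $V_3=R_2V_2R_2^T$, $V_4=R_2V_1R_2^T$, assumed pairwise distinct. Consider the four twinning equations $$Q_1V_2-V_1=a_1\otimes\hat n_1,\quad Q_2V_3-V_2=a_2\otimes\hat n_2,\quad Q_3V_4-V_3=a_3\otimes\hat n_3,\quad Q_4V_1-V_4=a_4\otimes\hat n_4,$$ where the pairs $(V_1,V_2),(V_2,V_3),(V_3,V_4),(V_4,V_1)$ are related by the $180^\circ$ rotations about $\hat e_1,\hat e_2,\hat e_1,\hat e_2$ respectively. (a) If $(Q_m,a_m,\hat n_m)$, $m=1,\dots,4$, are the Type-I solutions with respect to these axes and $Q_1Q_2Q_3Q_4=I$, then $\sum_{i=1}^3\lambda_i^{-2}(\hat v_i\cdot\hat e_1)(\hat v_i\cdot\hat e_2)=0$ (i.e. $\hat e_1\cdot V_1^{-2}\hat e_2=0$). (b) If instead they are the Type-II solutions with respect to these axes and $Q_1Q_2Q_3Q_4=I$, then $\sum_{i=1}^3\lambda_i^{2}(\hat v_i\cdot\hat e_1)(\hat v_i\cdot\hat e_2)=0$ (i.e. $\hat e_1\cdot V_1^{2}\hat e_2=0$). (c) Let $V_1=\begin{pmatrix}1&0&0\\0&a&b\\0&b&a\end{pmatrix}$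 with $b>0$, positive definite, $\lambda_1=a-b<1<\lambda_3=a+b$, and let $\hat e_1=\frac1{\sqrt2}(1,-1,0)$, $\hat e_2=\frac1{\sqrt2}(1,1,0)$. If $\lambda_3=\lambda_1/\sqrt{2\lambda_1^2-1}$, then the identity in (a) holds; if $\lambda_3=\sqrt{2-\lambda_1^2}$, then the identity in (b) holds.
   Context: For a symmetric positive-definite $W$ and unit vector $\hat e$ with $W':=(-I+2\hat e\otimes\hat e)W(-I+2\hat e\otimes\hat e)\neq W$, the equation $QW'-W=a\otimes\hat n$ ($Q\in SO(3)$) has two solutions: the Type-I solution $\hat n=\hat e$, $a=2\big(\frac{W^{-1}\hat e}{|W^{-1}\hat e|^2}-W\hat e\big)$, $Q=\big(-I+2\frac{W^{-1}\hat e\otimes W^{-1}\hat e}{|W^{-1}\hat e|^2}\big)(-I+2\hat e\otimes\hat e)$; and the Type-II solution, with $a$ parallel to $W\hat e$ and $\hat n$ parallel to $\hat e-\frac{W^2\hat e}{|W\hat e|^2}$, $Q=\big(-I+2\frac{W\hat e\otimes W\hat e}{|W\hat e|^2}\big)(-I+2\hat e\otimes\hat e)$. ''With respect to the axes'' means: equation $m$ uses $W=V_m$ (indices mod 4) and $\hat e=\hat e_1$ for $m=1,3$, $\hat e=\hat e_2$ for $m=2,4$. *)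

From mathcomp Require Import all_boot all_order all_algebra.
Set Implicit Arguments. Unset Strict Implicit. Unset Printing Implicit Defensive.
Import Order.TTheory GRing.Theory Num.Theory.
Local Open Scope ring_scope.

Section Defs.
Variable R : rcfType.

Definition dotv (u v : 'cV[R]_3) : R := (u^T *m v) 0 0.

Definition tens (a n : 'cV[R]_3) : 'M[R]_3 := a *m n^T.

Definition refl (e : 'cV[R]_3) : 'M[R]_3 := - 1%:M + 2%:R *: tens e e.

Definition reflu (u : 'cV[R]_3) : 'M[R]_3 :=
  - 1%:M + (2%:R / dotv u u) *: tens u u.

Definition conjR (e : 'cV[R]_3) (W : 'M[R]_3) : 'M[R]_3 :=
  refl e *m W *m refl e.

Definition sym_pd (W : 'M[R]_3) : Prop :=
  W^T = W /\ forall x : 'cV[R]_3, x != 0 -> 0 < dotv x (W *m x).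

(* Type-I solution of  Q W' - W = a (x) n  *)
Definition isTypeI (W : 'M[R]_3) (e : 'cV[R]_3) (Q : 'M[R]_3) (a n : 'cV[R]_3) : Prop :=
  let u := invmx W *m e in
  [/\ Q = reflu u *m refl e,
      a = 2%:R *: ((dotv u u)^-1 *: u - W *m e)
    & n = e].

Definition isTypeII (W : 'M[R]_3) (e : 'cV[R]_3) (Q : 'M[R]_3) (a n : 'cV[R]_3) : Prop :=
  let w := W *m e in
  [/\ Q = reflu w *m refl e,
      exists al : R, a = al *: w,
      exists be : R, n = be *: (e - (dotv w w)^-1 *: (W *m w)),
      dotv n n = 1
    & Q *m conjR e W - W = tens a n].

Definition eigendata (V : 'M[R]_3) (lam : 'I_3 -> R) (v : 'I_3 -> 'cV[R]_3) : Prop :=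
  (forall i j, dotv (v i) (v j) = (i == j)%:R) /\
  (forall i, V *m v i = lam i *: v i).

Definition Vc (a b : R) : 'M[R]_3 :=
  \matrix_(i < 3, j < 3)
    nth 0 (nth [::] [:: [:: 1; 0; 0]; [:: 0; a; b]; [:: 0; b; a]] i) j.

Definition e1c : 'cV[R]_3 :=
  \col_(i < 3) nth 0 [:: (Num.sqrt 2%:R)^-1; - (Num.sqrt 2%:R)^-1; 0] i.
Definition e2c : 'cV[R]_3 :=
  \col_(i < 3) nth 0 [:: (Num.sqrt 2%:R)^-1; (Num.sqrt 2%:R)^-1; 0] i.

End Defs.

From mathcomp Require Import all_boot all_order all_algebra ring lra.
Set Implicit Arguments. Unset Strict Implicit. Unset Printing Implicit Defensive.
Import Order.TTheory GRing.Theory Num.Theory.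
Local Open Scope ring_scope.

(* Both kinds of twinning rotation have the form Q = H_(M e) R_e, where H_u is the
   reflection -I + 2 u(x)u/|u|^2 and M = V^-1 (Type I) or M = V (Type II).
   Conjugating V by R_e1 or R_e2 conjugates M, while each axis is fixed or negated
   by the other reflection, so once the commuting involutions R_e1, R_e2 cancel the
   cycle Q1 Q2 Q3 Q4 collapses to (H_(M e1) H_(M e2))^2.  This is I exactly when the
   two reflections commute, i.e. (M e1 and M e2 being independent) when
   M e1 . M e2 = e1 . M^2 e2 vanishes; expanding in the eigenbasis of V1 gives the
   stated sums. *)

Lemma mulmx_invol_commute (R : pzRingType) n (A B : 'M[R]_n) :
  A *m A = 1%:M -> B *m B = 1%:M -> A *m B *m (A *m B) = 1%:M ->
  A *m B = B *m A.
Proof.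
move=> hA hB hAB.
by rewrite -[B *m A]mulmx1 -hAB !mulmxA -(mulmxA B A A) hA mulmx1 hB mul1mx.
Qed.

Lemma invmx_conj_invol (R : comUnitRingType) n (P V : 'M[R]_n) :
  P *m P = 1%:M -> invmx (P *m V *m P) = P *m invmx V *m P.
Proof.
move=> hP; have uP : P \in unitmx by apply: (@intro_unitmx _ _ P P).
have [uV | nuV] := boolP (V \in unitmx); last first.
  by rewrite !invmx_out ?inE ?unitmx_mul ?uP ?(negbTE nuV).
have inv_left : P *m invmx V *m P *m (P *m V *m P) = 1%:M.
  by rewrite -!mulmxA (mulmxA P P) hP mul1mx (mulmxA (invmx V)) mulVmx ?mul1mx.
have uPVP : P *m V *m P \in unitmx by rewrite !unitmx_mul uP uV.
by rewrite -[RHS]mulmx1 -(mulmxV uPVP) mulmxA inv_left mul1mx.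
Qed.

Section Euclid.
Variable R : rcfType.
Implicit Types (a b c d n u w x y e f : 'cV[R]_3) (M P : 'M[R]_3).

Lemma dotvE u w : dotv u w = \sum_i u i 0 * w i 0.
Proof. by rewrite /dotv mxE; apply: eq_bigr => i _; rewrite mxE. Qed.

Lemma dotvC u w : dotv u w = dotv w u.
Proof. by rewrite !dotvE; apply: eq_bigr => i _; rewrite mulrC. Qed.

Lemma dotv_mulmxl M u w : dotv (M *m u) w = dotv u (M^T *m w).
Proof. by rewrite /dotv trmx_mul mulmxA. Qed.

Lemma dotvZl (k : R) u w : dotv (k *: u) w = k * dotv u w.
Proof. by rewrite /dotv linearZ /= -scalemxAl mxE. Qed.

Lemma dotvDl u u' w : dotv (u + u') w = dotv u w + dotv u' w.
Proof. by rewrite /dotv linearD /= mulmxDl mxE. Qed.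

Lemma dotvNl u w : dotv (- u) w = - dotv u w.
Proof. by rewrite -scaleN1r dotvZl mulN1r. Qed.

Lemma dotvZr (k : R) u w : dotv u (k *: w) = k * dotv u w.
Proof. by rewrite dotvC dotvZl dotvC. Qed.

Lemma dotvDr u w w' : dotv u (w + w') = dotv u w + dotv u w'.
Proof. by rewrite dotvC dotvDl !(dotvC u). Qed.

Lemma dotvNr u w : dotv u (- w) = - dotv u w.
Proof. by rewrite dotvC dotvNl dotvC. Qed.

Lemma dotv0l w : dotv 0 w = 0.
Proof. by rewrite -(scale0r 0) dotvZl mul0r. Qed.

Lemma dotv_suml (F : 'I_3 -> 'cV[R]_3) w :
  dotv (\sum_i F i) w = \sum_i dotv (F i) w.
Proof. by rewrite !big_ord_recl !big_ord0 !addr0 !dotvDl. Qed.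

Lemma dotvv_eq0 u : dotv u u = 0 -> u = 0.
Proof.
rewrite dotvE => /psumr_eq0P sq0; apply/matrixP => i j; rewrite ord1 mxE.
have /(_ i isT)/eqP := sq0 (fun k _ => sqr_ge0 (u k 0)).
by rewrite mulf_eq0 orbb => /eqP.
Qed.

Lemma tens_mulmx a n x : tens a n *m x = dotv n x *: a.
Proof. by rewrite /tens -mulmxA [_^T *m _]mx11_scalar mul_mx_scalar. Qed.

Lemma mulmx_tens M a n : M *m tens a n = tens (M *m a) n.
Proof. by rewrite /tens mulmxA. Qed.

Lemma tens_mulmxr M a n : tens a n *m M = tens a (M^T *m n).
Proof. by rewrite /tens -mulmxA trmx_mul trmxK. Qed.

Lemma tens_tens a b c d : tens a b *m tens c d = dotv b c *: tens a d.
Proof. by rewrite /tens mulmxA tens_mulmx scalemxAl. Qed.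

Lemma trmx_tens a b : (tens a b)^T = tens b a.
Proof. by rewrite /tens trmx_mul trmxK. Qed.

Lemma tensNN a : tens (- a) (- a) = tens a a.
Proof. by rewrite /tens linearN /= mulmxN mulNmx opprK. Qed.


Lemma trmx_refl e : (refl e)^T = refl e.
Proof. by rewrite /refl linearD linearN /= trmx1 linearZ /= trmx_tens. Qed.

Lemma refl_fix e : dotv e e = 1 -> refl e *m e = e.
Proof.
move=> e1; rewrite /refl mulmxDl mulNmx mul1mx -scalemxAl tens_mulmx e1 scale1r.
by rewrite scaler_nat mulr2n addKr.
Qed.

Lemma refl_orth e f : dotv e f = 0 -> refl e *m f = - f.
Proof.
move=> ef; rewrite /refl mulmxDl mulNmx mul1mx -scalemxAl tens_mulmx ef.
by rewrite scale0r scaler0 addr0.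
Qed.

Lemma refl_invol e : dotv e e = 1 -> refl e *m refl e = 1%:M.
Proof.
move=> e1; rewrite {1}/refl mulmxDl mulNmx mul1mx -scalemxAl tens_mulmxr.
by rewrite trmx_refl refl_fix // /refl opprD opprK addrNK.
Qed.

Lemma refl_commute e f : dotv e f = 0 -> refl e *m refl f = refl f *m refl e.
Proof.
move=> ef; rewrite /refl !mulmxDl !mulmxDr !mulNmx !mulmxN !mul1mx !mulmx1.
rewrite -!scalemxAl -!scalemxAr !tens_tens ef dotvC ef !scale0r !scaler0.
by rewrite !addr0 addrAC.
Qed.

Lemma reflu_opp u : reflu (- u) = reflu u.
Proof. by rewrite /reflu dotvNl dotvNr opprK tensNN. Qed.

Lemma reflu_conj P u :
  P^T = P -> P *m P = 1%:M -> reflu (P *m u) = P *m reflu u *m P.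
Proof.
move=> symP invP; rewrite /reflu dotv_mulmxl symP mulmxA invP mul1mx.
rewrite mulmxDr mulmxN mulmx1 mulmxDl mulNmx invP; congr (_ + _).
by rewrite -scalemxAr -scalemxAl mulmx_tens tens_mulmxr symP.
Qed.

Lemma reflu_mulmx u x : reflu u *m x = - x + (2%:R / dotv u u * dotv u x) *: u.
Proof. by rewrite /reflu mulmxDl mulNmx mul1mx -scalemxAl tens_mulmx scalerA. Qed.

Lemma trmx_reflu u : (reflu u)^T = reflu u.
Proof. by rewrite /reflu linearD linearN /= trmx1 linearZ /= trmx_tens. Qed.

Lemma reflu_invol u : dotv u u != 0 -> reflu u *m reflu u = 1%:M.
Proof.
move=> u0; rewrite {1}/reflu mulmxDl mulNmx mul1mx -scalemxAl tens_mulmxr.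
have -> : (reflu u)^T *m u = u.
  by rewrite trmx_reflu reflu_mulmx mulfVK // scaler_nat mulr2n addKr.
by rewrite /reflu opprD opprK addrNK.
Qed.

Lemma reflu_commute_orth u w z :
  dotv u u != 0 -> dotv u z = 0 -> dotv w z != 0 ->
  reflu u *m reflu w = reflu w *m reflu u -> dotv u w = 0.
Proof.
move=> u0 uz wz comm.
have w0 : dotv w w != 0.
  by apply: contraNneq wz => /dotvv_eq0 ->; rewrite dotv0l.
(* pairing both sides applied to z with u, they differ by 4 b (w.z)(u.w) *)
have := congr1 (fun X => dotv u (X *m z)) comm => /=.
rewrite -!mulmxA !reflu_mulmx !(dotvDr, dotvNr, dotvZr) uz.
set a := 2 / dotv u u; set b := 2 / dotv w w.
have au Y : a * Y * dotv u u = 2 * Y by rewrite mulrAC mulfVK // mulrC.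
rewrite au => h.
have bpc : b * dotv w z * dotv u w = 0 by lra.
have b0 : b != 0 by rewrite mulf_neq0 ?invr_eq0 // pnatr_eq0.
by move/eqP: bpc; rewrite mulf_eq0 mulf_eq0 (negbTE b0) (negbTE wz) => /eqP.
Qed.

Definition twin_rotation M e : 'M[R]_3 := reflu (M *m e) *m refl e.

Lemma twin_cycle_collapse M e1 e2 :
  dotv e1 e1 = 1 -> dotv e2 e2 = 1 -> dotv e1 e2 = 0 ->
  twin_rotation M e1 *m twin_rotation (conjR e1 M) e2
    *m twin_rotation (conjR e2 (conjR e1 M)) e1 *m twin_rotation (conjR e2 M) e2
  = reflu (M *m e1) *m reflu (M *m e2) *m (reflu (M *m e1) *m reflu (M *m e2)).
Proof.
move=> e11 e22 e12; have e21 : dotv e2 e1 = 0 by rewrite dotvC.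
have reflu_conjR e W u : dotv e e = 1 ->
    reflu (conjR e W *m u) = refl e *m reflu (W *m (refl e *m u)) *m refl e.
  by move=> ee; rewrite /conjR -!mulmxA reflu_conj ?trmx_refl ?refl_invol ?mulmxA.
rewrite /twin_rotation !reflu_conjR //.
rewrite !(refl_orth e12, refl_orth e21, refl_fix e11, refl_fix e22, mulmxN).
rewrite !reflu_opp !mulmxA.
have s1 X : X *m refl e1 *m refl e1 = X by rewrite -mulmxA refl_invol ?mulmx1.
have s2 X : X *m refl e2 *m refl e2 = X by rewrite -mulmxA refl_invol ?mulmx1.
have c21 X : X *m refl e2 *m refl e1 = X *m refl e1 *m refl e2.
  by rewrite -!mulmxA refl_commute.
by rewrite !(s1, s2, c21).
Qed.

Lemma twin_cycle_orth M e1 e2 : M \in unitmx ->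
  dotv e1 e1 = 1 -> dotv e2 e2 = 1 -> dotv e1 e2 = 0 ->
  twin_rotation M e1 *m twin_rotation (conjR e1 M) e2
    *m twin_rotation (conjR e2 (conjR e1 M)) e1 *m twin_rotation (conjR e2 M) e2
  = 1%:M ->
  dotv (M *m e1) (M *m e2) = 0.
Proof.
move=> uM e11 e22 e12; rewrite twin_cycle_collapse // => cycle1.
have dual x y : dotv (M *m x) ((invmx M)^T *m y) = dotv x y.
  by rewrite dotv_mulmxl mulmxA -trmx_mul mulVmx // trmx1 mul1mx.
have nondeg x : dotv x x = 1 -> dotv (M *m x) (M *m x) != 0.
  move=> x1; apply: contra_neq (@oner_neq0 R) => /dotvv_eq0 Mx0.
  by rewrite -x1 -dual Mx0 dotv0l.
(* M^-T e2 is orthogonal to M e1 but not to M e2 *)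
apply: (@reflu_commute_orth _ _ ((invmx M)^T *m e2)).
- exact: nondeg.
- by rewrite dual.
- by rewrite dual e22 oner_neq0.
- by apply: mulmx_invol_commute cycle1; apply: reflu_invol; apply: nondeg.
Qed.

Section Orthonormal.
Variable v : 'I_3 -> 'cV[R]_3.
Hypothesis v_on : forall i j, dotv (v i) (v j) = (i == j)%:R.

Lemma sum_tens_orthonormal : \sum_i tens (v i) (v i) = 1%:M.
Proof.
pose U : 'M[R]_3 := \matrix_(r, i) v i r 0.
have UtU : U^T *m U = 1%:M.
  apply/matrixP => i j; rewrite !mxE -v_on dotvE; apply: eq_bigr => k _.
  by rewrite !mxE.
rewrite -(mulmx1C UtU); apply/matrixP => r s; rewrite summxE !mxE.
by apply: eq_bigr => i _; rewrite /tens !mxE big_ord1 !mxE.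
Qed.

Lemma orthonormal_expand x : x = \sum_i dotv (v i) x *: v i.
Proof.
rewrite -{1}[x]mul1mx -sum_tens_orthonormal mulmx_suml.
by apply: eq_bigr => i _; rewrite tens_mulmx.
Qed.

Lemma dotv_orthonormal_sum (c : 'I_3 -> R) i :
  dotv (v i) (\sum_j c j *: v j) = c i.
Proof.
rewrite dotvC dotv_suml (bigD1 i) //= dotvZl v_on eqxx mulr1 big1 ?addr0 //.
by move=> j /negbTE ji; rewrite dotvZl v_on ji mulr0.
Qed.

Lemma dotv_eigen M (mu : 'I_3 -> R) :
  (forall i, M *m v i = mu i *: v i) -> forall x y,
  dotv (M *m x) (M *m y) = \sum_i mu i ^+ 2 * dotv (v i) x * dotv (v i) y.
Proof.
move=> Mv x y.
have Mz z : M *m z = \sum_i (dotv (v i) z * mu i) *: v i.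
  rewrite {1}(orthonormal_expand z) mulmx_sumr; apply: eq_bigr => i _.
  by rewrite -scalemxAr Mv scalerA.
rewrite (Mz x) dotv_suml; apply: eq_bigr => i _.
by rewrite dotvZl (Mz y) dotv_orthonormal_sum; ring.
Qed.

End Orthonormal.

Lemma eigendata_inv (V N : 'M[R]_3) (lam : 'I_3 -> R) (v : 'I_3 -> 'cV[R]_3) :
  N *m V = 1%:M -> eigendata V lam v -> eigendata N (fun i => (lam i)^-1) v.
Proof.
move=> NV [v_on Vv]; split => // i.
have vi : v i = lam i *: (N *m v i) by rewrite scalemxAr -Vv mulmxA NV mul1mx.
have lam0 : lam i != 0.
  apply/eqP => l0; move: (v_on i i).
  by rewrite eqxx vi l0 scale0r dotv0l => /esym/eqP; rewrite oner_eq0.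
by rewrite {2}vi scalerA mulVf // scale1r.
Qed.

Lemma sym_pd_unitmx (V : 'M[R]_3) : sym_pd V -> V \in unitmx.
Proof.
move=> [symV posV]; rewrite -row_free_unit -kermx_eq0.
apply/rowV0P => u /sub_kermxP uV0; apply/trmx_inj; rewrite trmx0.
apply/eqP; apply: contraT => ut0; have := posV _ ut0.
by rewrite -{1}symV -trmx_mul uV0 trmx0 /dotv mulmx0 mxE ltxx.
Qed.

Lemma dotv_Vc_e1c_e2c (x y : R) :
  dotv (Vc x y *m e1c R) (Vc x y *m e2c R) = (1 - x ^+ 2 - y ^+ 2) / 2%:R.
Proof.
have half : (Num.sqrt 2%:R)^-1 ^+ 2 = 2%:R^-1 :> R by rewrite exprVn sqr_sqrtr.
rewrite [RHS]mulrC -half dotvE.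
by rewrite !big_ord_recl big_ord0 !mxE !big_ord_recl !big_ord0 !mxE /=; ring.
Qed.

Lemma mulmx_Vc_inv (a b : R) : a ^+ 2 - b ^+ 2 != 0 ->
  Vc (a / (a ^+ 2 - b ^+ 2)) (- b / (a ^+ 2 - b ^+ 2)) *m Vc a b = 1%:M.
Proof.
move=> d0; apply/matrixP => i j; rewrite !mxE !big_ord_recl big_ord0 !mxE.
by case: i => [[|[|[|?]]] ?]; case: j => [[|[|[|?]]] ?] //=; field.
Qed.

Lemma Vc_typeI_balance (a b : R) : 1 < a + b ->
  a + b = (a - b) / Num.sqrt (2%:R * (a - b) ^+ 2 - 1) ->
  0 < a ^+ 2 - b ^+ 2 /\ (a ^+ 2 - b ^+ 2) ^+ 2 = a ^+ 2 + b ^+ 2.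
Proof.
set t := 2%:R * (a - b) ^+ 2 - 1 => ab1 ab_eq.
have t_gt0 : 0 < t.
  have [//|t_le0] := ltP 0 t.
  by move: ab_eq; rewrite ler0_sqrtr // invr0 mulr0; lra.
have sqrt_t : (a + b) * Num.sqrt t = a - b.
  by rewrite ab_eq mulfVK // gt_eqF // sqrtr_gt0.
have amb_gt0 : 0 < a - b by rewrite -sqrt_t mulr_gt0 ?sqrtr_gt0 //; lra.
have rel : (a + b) ^+ 2 * t = (a - b) ^+ 2.
  by rewrite -sqrt_t exprMn sqr_sqrtr // ltW.
have -> : a ^+ 2 - b ^+ 2 = (a - b) * (a + b) by ring.
split; first by rewrite mulr_gt0 //; lra.
by move: rel; rewrite /t; nra.
Qed.

Lemma Vc_typeII_balance (a b : R) : 1 < a + b ->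
  a + b = Num.sqrt (2%:R - (a - b) ^+ 2) -> a ^+ 2 + b ^+ 2 = 1.
Proof.
set t := 2%:R - (a - b) ^+ 2 => ab1 ab_eq.
have t_ge0 : 0 <= t.
  have [//|t_lt0] := leP 0 t.
  by move: ab_eq; rewrite ler0_sqrtr ?ltW //; lra.
have : (a + b) ^+ 2 = t by rewrite ab_eq sqr_sqrtr.
by rewrite /t; nra.
Qed.

End Euclid.

Theorem mainTheorem10 (R : rcfType) :
  (forall (e1 e2 : 'cV[R]_3) (V1 V2 V3 V4 : 'M[R]_3)
          (lam : 'I_3 -> R) (v : 'I_3 -> 'cV[R]_3),
     dotv e1 e1 = 1 -> dotv e2 e2 = 1 -> dotv e1 e2 = 0 ->
     sym_pd V1 -> eigendata V1 lam v ->
     V2 = refl e1 *m V1 *m (refl e1)^T ->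
     V3 = refl e2 *m V2 *m (refl e2)^T ->
     V4 = refl e2 *m V1 *m (refl e2)^T ->
     V1 != V2 -> V1 != V3 -> V1 != V4 -> V2 != V3 -> V2 != V4 -> V3 != V4 ->
     (* (a) Type-I solutions *)
     (forall (Q1 Q2 Q3 Q4 : 'M[R]_3) (a1 a2 a3 a4 n1 n2 n3 n4 : 'cV[R]_3),
        isTypeI V1 e1 Q1 a1 n1 -> isTypeI V2 e2 Q2 a2 n2 ->
        isTypeI V3 e1 Q3 a3 n3 -> isTypeI V4 e2 Q4 a4 n4 ->
        Q1 *m Q2 *m Q3 *m Q4 = 1%:M ->
        \sum_(i < 3) lam i ^- 2 * dotv (v i) e1 * dotv (v i) e2 = 0) /\
     (* (b) Type-II solutions *)
     (forall (Q1 Q2 Q3 Q4 : 'M[R]_3) (a1 a2 a3 a4 n1 n2 n3 n4 : 'cV[R]_3),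
        isTypeII V1 e1 Q1 a1 n1 -> isTypeII V2 e2 Q2 a2 n2 ->
        isTypeII V3 e1 Q3 a3 n3 -> isTypeII V4 e2 Q4 a4 n4 ->
        Q1 *m Q2 *m Q3 *m Q4 = 1%:M ->
        \sum_(i < 3) lam i ^+ 2 * dotv (v i) e1 * dotv (v i) e2 = 0)) /\
  (* (c) *)
  (forall (a b : R) (lam : 'I_3 -> R) (v : 'I_3 -> 'cV[R]_3),
     0 < b -> sym_pd (Vc a b) -> a - b < 1 -> 1 < a + b ->
     eigendata (Vc a b) lam v ->
     (a + b = (a - b) / Num.sqrt (2%:R * (a - b) ^+ 2 - 1) ->
        \sum_(i < 3) lam i ^- 2 * dotv (v i) (e1c R) * dotv (v i) (e2c R) = 0) /\
     (a + b = Num.sqrt (2%:R - (a - b) ^+ 2) ->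
        \sum_(i < 3) lam i ^+ 2 * dotv (v i) (e1c R) * dotv (v i) (e2c R) = 0)).
Proof.
split.
  move=> e1 e2 V1 _ _ _ lam v e11 e22 e12 pdV1 eigV1 -> -> -> _ _ _ _ _ _.
  have uV1 := sym_pd_unitmx pdV1; have [v_on Vv] := eigV1.
  rewrite !trmx_refl; split=> Q1 Q2 Q3 Q4 a1 a2 a3 a4 n1 n2 n3 n4.
    case=> -> _ _ [-> _ _] [-> _ _] [-> _ _].
    rewrite !invmx_conj_invol ?refl_invol // => /twin_cycle_orth.
    rewrite unitmx_inv uV1 (dotv_eigen v_on (eigendata_inv (mulVmx uV1) eigV1).2).
    by under eq_bigr do rewrite exprVn; apply.
  case=> -> _ _ _ _ [-> _ _ _ _] [-> _ _ _ _] [-> _ _ _ _] /twin_cycle_orth.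
  by rewrite (dotv_eigen v_on Vv) => /(_ uV1 e11 e22 e12).
move=> a b lam v _ _ _ ab1 [v_on Vv]; split.
  move=> /(Vc_typeI_balance ab1) [d_gt0 d_sq].
  have VcV := mulmx_Vc_inv (lt0r_neq0 d_gt0).
  under eq_bigr do rewrite -exprVn.
  rewrite -(dotv_eigen v_on (eigendata_inv VcV (conj v_on Vv)).2).
  rewrite dotv_Vc_e1c_e2c; set d := a ^+ 2 - b ^+ 2 in d_gt0 d_sq *.
  have -> : 1 - (a / d) ^+ 2 - (- b / d) ^+ 2 = (d ^+ 2 - (a ^+ 2 + b ^+ 2)) / d ^+ 2.
    by field; rewrite lt0r_neq0.
  by rewrite d_sq subrr !mul0r.
move=> /(Vc_typeII_balance ab1) ab_sq.
by rewrite -(dotv_eigen v_on Vv) dotv_Vc_e1c_e2c -addrA -opprD ab_sq subrr mul0r.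
Qed.
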